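(* Let $\Sigma$ be a topological Markov chain with shift $\sigma$ and $\mu$ a Gibbs measure on $\Sigma$ for a H\''older continuous potential (as in the context). Let $\{l_n\}$ be a sequence of natural numbers with $l_n\to\infty$. Then there exists a sequence of cylinders $\{C_n\}$, $C_n$ defined on an interval $\Lambda_n$, with $\sum_n\mu(C_n)=\infty$, such that the sequence $\{\Lambda_n\}$ is $\{l_n\}$-centered and $\{C_n\}$ does not satisfy condition (SP). Likewise, there exists such a sequence of cylinders with $\sum_n\mu(C_n)=\infty$ defined on an $\{l_n\}$-aligned sequence of intervals which does not satisfy (SP).
   Context: Let $M\ge2$ and $\mathbf A$ an $M\times M$ zero-one matrix with $\mathbf A^K$ entrywise positive for some $K\ge1$; $\Sigma=\{\underline\omega\in\{1,\dots,M\}^{\mathbb Z}:\mathbf A_{\omega_i\omega_{i+1}}=1\ \forall i\}$ with product topology and left shift $(\sigma\underline\omega)_i=\omega_{i+1}$; $\mu$ is the unique $\sigma$-invariant Gibbs measure of a H\''older continuous function on $\Sigma$ (H\''older w.r.t. $d_a(\underline\omega,\underline\omega')=a^n$, $n=\max\{n:\omega_i=\omega_i'\ \forall|i|<n\}$). A cylinder defined on $\Lambda=[n^-,n^+]\subset\mathbb Z$ is $\{\underline\omega'\in\Sigma:\omega_i'=\omega_i,\ n^-\le i\le n^+\}$ for fixed symbols $\omega_i$. A sequence of intervals $\{\Lambda_n\}$ is $\{l_n\}$-centered if the center $(n^-+n^+)/2$ of $\Lambda_n$ lies in $[-l_n/2,l_n/2]$ for all $n$, and $\{l_n\}$-aligned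 if the left endpoint of $\Lambda_n$ lies in $[0,l_n]$ for all $n$. For sets $A_n$ let $R_{mn}=\mu(\sigma^{-m}A_m\cap\sigma^{-n}A_n)-\mu(A_m)\mu(A_n)$; condition (SP) means: there is $C>0$ with $\sum_{m,n=M'}^NR_{mn}\le C\sum_{n=M'}^N\mu(A_n)$ for all $N\ge M'\ge1$. *)

From HB Require Import structures.
From mathcomp Require Import all_boot all_order all_algebra.
From mathcomp Require Import all_classical all_reals all_analysis.
Set Implicit Arguments. Unset Strict Implicit. Unset Printing Implicit Defensive.
Import Order.TTheory GRing.Theory Num.Theory.
Local Open Scope classical_set_scope.
Local Open Scope ring_scope.

(* Symbols {1,...,M} are represented by 'I_M = {0,...,M-1}; M = k.+2 >= 2. *)
Definition config (M : nat) := int -> 'I_M.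
Definition cfg (k : nat) := config k.+2.
HB.instance Definition _ (k : nat) := Choice.on (cfg k).
HB.instance Definition _ (k : nat) :=
  isPointed.Build (cfg k) (fun _ => ord0 : 'I_k.+2).

Definition shiftn (M : nat) (m : nat) (w : config M) : config M :=
  fun i => w (i + m%:Z).

Definition preshift (M : nat) (m : nat) (A : set (config M)) : set (config M) :=
  [set w | A (shiftn m w)].

Definition fcyl (M : nat) (a b : int) (w : config M) : set (config M) :=
  [set w' | forall i : int, a <= i <= b -> w' i = w i].

Definition cylinders (M : nat) : set (set (config M)) :=
  [set C | exists a b w, C = @fcyl M a b w].

(* the measurable space ({1..M}^Z, product sigma-algebra) *)
Definition SpaceZ (k : nat) := g_sigma_algebraType (@cylinders k.+2 : set (set (cfg k))).

Definition SigmaA (k : nat) (A : 'M[int]_k.+2) : set (config k.+2) :=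
  [set w | forall i : int, A (w i) (w (i + 1)) = 1].

Definition primitive01 (k : nat) (A : 'M[int]_k.+2) : Prop :=
  (forall i j, A i j = 0 \/ A i j = 1) /\
  exists K : nat, (1 <= K)%N /\ forall i j, 0 < (A ^+ K) i j.

(* Hoelder continuity on Sigma w.r.t. some metric d_a (0<a<1):
   |phi w - phi w'| <= C d_a(w,w'), where d_a(w,w') = a^n,
   n = max{n : w_i = w'_i for all |i| < n}. *)
Definition holder_potential (R : realType) (k : nat) (A : 'M[int]_k.+2)
  (phi : config k.+2 -> R) : Prop :=
  exists (a C : R), 0 < a < 1 /\ 0 <= C /\
    forall w w', SigmaA A w -> SigmaA A w' ->
      forall n : nat, (forall i : int, `|i| < n%:Z -> w i = w' i) ->
        `|phi w - phi w'| <= C * a ^+ n.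

Definition birkhoff (R : realType) (M : nat) (phi : config M -> R) (m : nat)
  (w : config M) : R := \sum_(j < m) phi (shiftn j w).

Definition invariant_gibbs (R : realType) (k : nat) (A : 'M[int]_k.+2)
  (phi : config k.+2 -> R) (mu : probability (SpaceZ k) R) : Prop :=
  [/\ mu (SigmaA A) = 1%E,
      (forall X : set (SpaceZ k), measurable X ->
         mu (preshift 1 X) = mu X) &
      exists (P c : R), 1 <= c /\
        forall (w : config k.+2) (m : nat), SigmaA A w -> (1 <= m)%N ->
          let g := expR (- (P * m%:R) + birkhoff phi m w) in
          (c^-1 * g <= fine (mu (SigmaA A `&` fcyl 0 (m%:Z - 1) w)) <= c * g)].

Definition cyl (k : nat) (A : 'M[int]_k.+2) (a b : int) (w : config k.+2)
  : set (config k.+2) := SigmaA A `&` fcyl a b w.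

Definition Rmn (R : realType) (k : nat) (mu : probability (SpaceZ k) R)
  (S : nat -> set (config k.+2)) (m n : nat) : R :=
  fine (mu (preshift m (S m) `&` preshift n (S n)))
  - fine (mu (S m)) * fine (mu (S n)).

Definition SP (R : realType) (k : nat) (mu : probability (SpaceZ k) R)
  (S : nat -> set (config k.+2)) : Prop :=
  exists C : R, 0 < C /\
    forall M' N : nat, (1 <= M')%N -> (M' <= N)%N ->
      \sum_(M' <= m < N.+1) \sum_(M' <= n < N.+1) Rmn mu S m n
        <= C * \sum_(M' <= n < N.+1) fine (mu (S n)).

(* {l_n}-centered: center (a_n+b_n)/2 in [-l_n/2, l_n/2] *)
Definition centered (a b : nat -> int) (l : nat -> nat) : Prop :=
  forall n, `|a n + b n| <= (l n)%:Z.

Definition aligned (a : nat -> int) (l : nat -> nat) : Prop :=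
  forall n, 0 <= a n <= (l n)%:Z.

(* Fix a symbol s and take single-site cylinders C_n = [w_(a_n) = s].  By shift
   invariance all of them have the same measure p, and 0 < p < 1 by the Gibbs
   lower bound (every symbol occurs in Sigma_A since A is primitive, and M >= 2),
   so sum_n mu(C_n) diverges.  Since l_n -> oo one can choose 0 <= a_n <= l_n/2 so
   that, for every j, n + a_n is constant on some window of j consecutive indices.
   On such a window all the sets sigma^-n C_n coincide, hence R_mn = p - p^2 there
   and the double sum of R_mn over the window is j^2 (p - p^2), which no C j p
   dominates.  With b_n = a_n the intervals are both l_n-centered and l_n-aligned. *)

From HB Require Import structures.
From mathcomp Require Import all_boot all_order all_algebra.
From mathcomp Require Import all_classical all_reals all_analysis.
From mathcomp Require Import zify ring lra.
Set Implicit Arguments. Unset Strict Implicit. Unset Printing Implicit Defensive.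
Import Order.TTheory GRing.Theory Num.Theory.

Section Blocks.
Variable N : nat -> nat.

Fixpoint block_start (j : nat) : nat :=
  if j is j'.+1 then maxn (block_start j' + j').+1 (N j) else (N 0).+1.

(* On the j-th block [block_start j, block_start j + j) the offset counts down
   from j - 1 to 0; the truncated subtraction makes it 0 outside the blocks. *)
Definition block_offset (n : nat) : nat :=
  \max_(j < n.+1 | block_start j <= n) (block_start j + j - n.+1).

Lemma leq_block_start j : N j <= block_start j.
Proof. by case: j => [|j] /=; lia. Qed.

Lemma ltn_block_start j : j < block_start j.
Proof. by elim: j => [|j IH] /=; lia. Qed.

Lemma block_start_sep i j : i < j -> block_start i + i < block_start j.
Proof.
elim: j => // j IH; rewrite ltnS leq_eqVlt => /orP[/eqP ->|/IH]; rewrite /=; lia.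
Qed.

Lemma block_offset_in_block j n : block_start j <= n < block_start j + j ->
  block_offset n + n.+1 = block_start j + j.
Proof.
move=> /andP[startj endj].
suff -> : block_offset n = block_start j + j - n.+1 by lia.
have jn : j < n.+1 by have := ltn_block_start j; lia.
apply/eqP; rewrite eqn_leq; apply/andP; split.
  apply/bigmax_leqP => i starti.
  case: (ltngtP i j) => [/block_start_sep|/block_start_sep|->] //; lia.
exact: (leq_bigmax_cond (Ordinal jn) startj).
Qed.

Lemma block_offset_le c n : (forall j, N j <= n -> j <= c) -> block_offset n <= c.
Proof.
move=> Nc; apply/bigmax_leqP => j startj.
have := Nc j (leq_trans (leq_block_start j) startj); lia.
Qed.

End Blocks.

Local Open Scope classical_set_scope.
Local Open Scope ring_scope.

Lemma mx_pow_gt0_path (R : realDomainType) (m : nat) (A : 'M[R]_m.+1) :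
  (forall i j, A i j = 0 \/ A i j = 1) ->
  forall (n : nat) (i j : 'I_m.+1), 0 < (A ^+ n) i j ->
  exists f : nat -> 'I_m.+1, [/\ f 0%N = i, f n = j &
     forall r, (r < n)%N -> A (f r) (f r.+1) = 1].
Proof.
move=> A01; elim=> [|n IH] i j.
  rewrite expr0 mxE; case: eqP => [->|]; last by rewrite ltxx.
  by move=> _; exists (fun=> j).
rewrite exprSr mxE => sum_gt0.
have [x] : exists x, 0 < (A ^+ n) i x * A x j.
  apply/not_existsP => le0; move: sum_gt0; apply/negP; rewrite -leNgt.
  by apply: sumr_le0 => x _; rewrite leNgt; apply/negP; exact: le0.
have [->|Axj] := A01 x j; first by rewrite mulr0 ltxx.
rewrite Axj mulr1 => /IH[f [f0 fn fA]].
exists (fun r => if (r <= n)%N then f r else j); split => [||r].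
- by rewrite f0.
- by rewrite ltnn.
rewrite /= ltnS => rn; rewrite rn; have [/fA //|nr] := ltnP r n.
suff -> : r = n by rewrite fn.
by apply/eqP; rewrite eqn_leq rn nr.
Qed.

Lemma probability_fine_lt1 (R : realType) d (T : measurableType d)
    (mu : probability T R) (X Y : set T) :
  measurable X -> measurable Y -> X `&` Y = set0 -> 0 < fine (mu Y) ->
  fine (mu X) < 1.
Proof.
move=> mX mY XY0 muY_gt0.
have := probability_le1 mu (measurableU _ _ mX mY).
rewrite measureU // -(fineK (fin_num_measure mu X mX)) -(fineK (fin_num_measure mu Y mY)).
by rewrite -EFinD lee_fin; lra.
Qed.

Lemma nneseries_cst_gt0 (R : realType) (p : R) :
  0 < p -> (\sum_(0 <= n <oo) p%:E = +oo)%E.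
Proof.
move=> p_gt0; apply: eq_infty => r.
have [K rK] : exists K : nat, r < p * K%:R.
  exists (Num.Def.truncn (r / p)).+1.
  by rewrite mulrC -ltr_pdivrMr // truncnS_gt.
apply: le_trans (nneseries_lim_ge K _) => // [|n _ _]; last exact/ltW.
by rewrite sumEFin sumr_const_nat subn0 lee_fin -mulr_natr ltW.
Qed.

Lemma cvgn_thresholds (f : nat -> nat) : f @ \oo --> \oo ->
  exists N : nat -> nat, forall j m, (N j <= m)%N -> (j <= f m)%N.
Proof.
move=> /cvgnyPge f_oo.
suff /choice[N fN] : forall j, exists N, forall m, (N <= m)%N -> (j <= f m)%N.
  by exists N.
by move=> j; have [N _ fN] := f_oo j; exists N => m /fN.
Qed.

Lemma fcyl_pointE (M : nat) (i : int) (u w : config M) : fcyl i i u w <-> w i = u i.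
Proof.
split=> [|wu j /andP[ij ji]]; first by apply; rewrite lexx.
by have -> : j = i by apply/eqP; rewrite eq_le ij ji.
Qed.

Section MarkovChain.
Variables (k : nat) (A : 'M[int]_k.+2).

Lemma SigmaA_point_at : primitive01 A -> forall t, exists2 w, SigmaA A w & w 0 = t.
Proof.
move=> [A01 [K [K_gt0 AK_gt0]]] t.
have [f [f0 fK fA]] := mx_pow_gt0_path A01 (AK_gt0 t t).
pose r (i : int) := absz (i %% K%:Z)%Z.
have rE i : (i %% K%:Z)%Z = (r i)%:Z by rewrite gez0_abs // modz_ge0 // eqz_nat -lt0n.
have r_lt i : (r i < K)%N by rewrite -ltz_nat -rE ltz_pmod // ltz_nat.
exists (f \o r); last by rewrite /= /r mod0z f0.
have rS i : r (i + 1) = ((r i).+1 %% K)%N.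
  by apply/eqP; rewrite -eqz_nat -rE -modz_nat -addn1 PoszD -rE modzDml.
move=> i /=; rewrite rS.
have [lt_K|eq_K] : ((r i).+1 < K)%N \/ (r i).+1 = K by have := r_lt i; lia.
  by rewrite modn_small // fA.
by rewrite eq_K modnn f0 -fK -eq_K fA.
Qed.

Definition site_cyl (i : int) (s : 'I_k.+2) : set (config k.+2) :=
  cyl A i i (fun=> s).

Lemma SigmaA_shiftn n w : SigmaA A (shiftn n w) <-> SigmaA A w.
Proof.
rewrite /SigmaA /shiftn; split=> Aw i.
  by have := Aw (i - n%:Z); rewrite subrK addrAC subrK.
by rewrite addrAC; exact: Aw.
Qed.

Lemma preshift_site_cyl n i s : preshift n (site_cyl i s) = site_cyl (i + n%:Z) s.
Proof.
apply/seteqP; split=> w [Aw /fcyl_pointE wi]; split.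
- by move/SigmaA_shiftn: Aw.
- exact/fcyl_pointE.
- exact/SigmaA_shiftn.
- exact/fcyl_pointE.
Qed.

Lemma measurable_fcyl a b (w : config k.+2) : measurable (fcyl a b w : set (SpaceZ k)).
Proof. by apply: sub_sigma_algebra; exists a, b, w. Qed.

Lemma measurable_SigmaA : measurable (SigmaA A : set (SpaceZ k)).
Proof.
pose allowed_at (i : int) : set (SpaceZ k) :=
  \bigcup_(st in [set st : 'I_k.+2 * 'I_k.+2 | A st.1 st.2 = 1])
     (fcyl i i (fun=> st.1) `&` fcyl (i + 1) (i + 1) (fun=> st.2)).
have allowed_atE i w : allowed_at i w <-> A (w i) (w (i + 1)) = 1.
  split=> [[st /= Ast [/fcyl_pointE -> /fcyl_pointE ->]] //|Aw].
  by exists (w i, w (i + 1)) => //; split; apply/fcyl_pointE.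
have -> : SigmaA A = \bigcap_(n : nat) (allowed_at (Posz n) `&` allowed_at (Negz n)).
  apply/seteqP; split=> w Aw.
    by move=> n _; split; apply/allowed_atE.
  by case=> n; have [/allowed_atE ? /allowed_atE ?] := Aw n I.
apply: bigcapT_measurable => n; apply: measurableI;
  apply: fin_bigcup_measurable; do ?exact: finite_finset;
  by move=> st _; apply: measurableI; apply: measurable_fcyl.
Qed.

Lemma measurable_site_cyl i s : measurable (site_cyl i s : set (SpaceZ k)).
Proof. by apply: measurableI; [exact: measurable_SigmaA | exact: measurable_fcyl]. Qed.

End MarkovChain.

Lemma not_SP_of_coincident_windows (R : realType) (k : nat)
    (mu : probability (SpaceZ k) R) (S : nat -> set (config k.+2)) (p : R) :
  0 < p < 1 -> (forall n, fine (mu (S n)) = p) ->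
  (forall j, exists2 M', (0 < M')%N & exists2 E : set (config k.+2),
     fine (mu E) = p & forall n, (M' <= n <= M' + j)%N -> preshift n (S n) = E) ->
  ~ SP mu S.
Proof.
move=> /andP[p_gt0 p_lt1] muS windows [C [C_gt0 SPC]].
have [j Cj] : exists j : nat, C < (1 - p) * j.+1%:R.
  exists (Num.Def.truncn (C / (1 - p))); rewrite mulrC -ltr_pdivrMr ?subr_gt0 //.
  exact: truncnS_gt.
have [M' M'_gt0 [E muE SE]] := windows j.
have window_size : ((M' + j).+1 - M' = j.+1)%N by lia.
have RmnE m n : (M' <= m < (M' + j).+1)%N -> (M' <= n < (M' + j).+1)%N ->
    Rmn mu S m n = p - p * p.
  by move=> mM nM; rewrite /Rmn SE // SE // setIid muE !muS.
pose J : R := j.+1%:R.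
have sumRmnE : \sum_(M' <= m < (M' + j).+1) \sum_(M' <= n < (M' + j).+1) Rmn mu S m n
    = (p - p * p) * J * J.
  rewrite (eq_big_nat _ _ (F2 := fun=> (p - p * p) *+ j.+1)).
    by rewrite sumr_const_nat window_size /J !mulr_natr.
  move=> m mM; rewrite (eq_big_nat _ _ (F2 := fun=> p - p * p)) => [|n nM].
    by rewrite sumr_const_nat window_size.
  exact: RmnE.
have sum_muE : \sum_(M' <= n < (M' + j).+1) fine (mu (S n)) = p * J.
  by rewrite (eq_big_nat _ _ (F2 := fun=> p)) // sumr_const_nat window_size mulr_natr.
have := SPC M' (M' + j) M'_gt0 (leq_addr _ _); rewrite sumRmnE sum_muE.
have J_gt0 : 0 < J by rewrite ltr0n.
have : 0 < (p * J) * ((1 - p) * J - C) by rewrite mulr_gt0 ?mulr_gt0 ?subr_gt0.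
have -> : (p * J) * ((1 - p) * J - C) = (p - p * p) * J * J - C * (p * J) by ring.
by rewrite subr_gt0 ltNge => /negP.
Qed.

Section GibbsMeasure.
Variables (R : realType) (k : nat) (A : 'M[int]_k.+2).
Variables (phi : config k.+2 -> R) (mu : probability (SpaceZ k) R).
Hypotheses (A_primitive : primitive01 A) (mu_gibbs : invariant_gibbs A phi mu).

Lemma measure_site_cyl_shift i s : mu (site_cyl A i s) = mu (site_cyl A 0 s).
Proof.
have [_ mu_invariant _] := mu_gibbs.
have shift (n : nat) j : mu (site_cyl A (j + n%:Z) s) = mu (site_cyl A j s).
  elim: n => [|n IH]; first by congr (mu (site_cyl A _ s)); lia.
  rewrite -IH -(mu_invariant _ (measurable_site_cyl A (j + n%:Z) s)) preshift_site_cyl.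
  by rewrite -addrA -PoszD addn1.
case: i => n; first by rewrite -[Posz n]add0r shift.
by rewrite -(shift n.+1) NegzE addNr.
Qed.

Lemma site_cyl_measure_gt0 s : 0 < fine (mu (site_cyl A 0 s)).
Proof.
have [_ _ [P [c [c_ge1 gibbs]]]] := mu_gibbs.
have [w Aw w0] := SigmaA_point_at A_primitive s.
have /andP[+ _] := gibbs w 1%N Aw (leqnn 1).
have -> : SigmaA A `&` fcyl 0 (1%:Z - 1) w = site_cyl A 0 s.
  rewrite (_ : 1%:Z - 1 = 0) //; congr (_ `&` _).
  by apply/seteqP; split=> v /fcyl_pointE vw; apply/fcyl_pointE; rewrite vw ?w0.
apply: lt_le_trans; rewrite mulr_gt0 ?expR_gt0 // invr_gt0.
exact: lt_le_trans ltr01 c_ge1.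
Qed.

Lemma site_cyl_measure_lt1 s : fine (mu (site_cyl A 0 s)) < 1.
Proof.
pose t : 'I_k.+2 := if s == ord0 then ord_max else ord0.
apply: (probability_fine_lt1 (measurable_site_cyl A 0 s) (measurable_site_cyl A 0 t));
  last exact: site_cyl_measure_gt0.
apply/seteqP; split=> // v [[_ /fcyl_pointE /= vs] [_ /fcyl_pointE /=]].
by rewrite vs /t; case: eqP => [-> /(congr1 val) //|s_ne0 /s_ne0].
Qed.

Lemma site_cylinders_not_SP (l : nat -> nat) : l @ \oo --> \oo ->
  exists a : nat -> nat, [/\ forall n, (2 * a n <= l n)%N,
    (\sum_(0 <= n <oo) mu (site_cyl A (a n)%:Z ord0) = +oo)%E &
    ~ SP mu (fun n => site_cyl A (a n)%:Z ord0)].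
Proof.
move=> /cvgn_thresholds[N lN].
pose p := fine (mu (site_cyl A 0 ord0)).
have muE i : mu (site_cyl A i ord0) = p%:E.
  by rewrite measure_site_cyl_shift fineK // fin_num_measure //; exact: measurable_site_cyl.
have fine_muE i : fine (mu (site_cyl A i ord0)) = p by rewrite muE.
have p_gt0 : 0 < p := site_cyl_measure_gt0 ord0.
exists (block_offset (N \o muln 2)); split.
- move=> n; suff : (block_offset (N \o muln 2) n <= l n %/ 2)%N by lia.
  by apply: block_offset_le => j /lN; lia.
- by rewrite (eq_eseriesr (fun n _ => muE _)) nneseries_cst_gt0.
apply: (@not_SP_of_coincident_windows _ _ _ _ p) => // [|j].
  by rewrite p_gt0 site_cyl_measure_lt1.
pose M' := block_start (N \o muln 2) j.+1.
exists M'; first exact: leq_ltn_trans (ltn_block_start _ _).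
exists (site_cyl A (M' + j)%:Z ord0) => // n n_window.
rewrite preshift_site_cyl -PoszD; congr (site_cyl A (Posz _) _).
have := @block_offset_in_block (N \o muln 2) j.+1 n; lia.
Qed.

End GibbsMeasure.

Theorem theorem2p2 (R : realType) (k : nat) (A : 'M[int]_k.+2)
  (phi : config k.+2 -> R) (mu : probability (SpaceZ k) R)
  (l : nat -> nat) :
  primitive01 A -> holder_potential A phi -> invariant_gibbs A phi mu ->
  (fun n => (l n)%:R : R) @ \oo --> +oo ->
  (exists (a b : nat -> int) (w : nat -> config k.+2),
     (forall n, a n <= b n) /\
     (\sum_(0 <= n <oo) mu (cyl A (a n) (b n) (w n)) = +oo)%E /\
     centered a b l /\
     ~ SP mu (fun n => cyl A (a n) (b n) (w n))) /\
  (exists (a b : nat -> int) (w : nat -> config k.+2),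
     (forall n, a n <= b n) /\
     (\sum_(0 <= n <oo) mu (cyl A (a n) (b n) (w n)) = +oo)%E /\
     aligned a l /\
     ~ SP mu (fun n => cyl A (a n) (b n) (w n))).
Proof.
move=> A_primitive _ mu_gibbs /cvgrnyP l_oo.
have [a [a_le divergent not_SP]] := site_cylinders_not_SP A_primitive mu_gibbs l_oo.
split; exists (fun n => (a n)%:Z), (fun n => (a n)%:Z), (fun=> fun=> ord0);
  (split; [by [] | split; [exact: divergent | split; [|exact: not_SP]]]) => n /=.
- by rewrite -PoszD ger0_norm // lez_nat addnn -mul2n.
- by rewrite lez_nat (leq_trans (leq_pmull _ _) (a_le n)).
Qed.
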